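(* Consider the Keyfitz–Kranzer system $\partial_t u_1 + \partial_x(u_1^2 - u_2) = 0$, $\partial_t u_2 + \partial_x(\tfrac{1}{3}u_1^3 - u_1) = 0$ with flux $f(u) = (u_1^2 - u_2,\ \tfrac13 u_1^3 - u_1)^T$ for $u=(u_1,u_2)\in\mathbb{R}^2$, entropy $U(u) = \exp(\tfrac12 u_1^2 - u_2)$, entropy variables $w(u) = (u_1 U(u),\ -U(u))^T$ and flux potential $\psi(u) = (\tfrac23 u_1^3 - u_1 u_2)\,U(u)$. For $u_-=(u_{1,-},u_{2,-})$, $u_+=(u_{1,+},u_{2,+})\in\mathbb{R}^2$ write $U_\pm = U(u_\pm)$ and define $f^{\mathrm{num}}(u_-,u_+) = (f^{\mathrm{num}}_1, f^{\mathrm{num}}_2)$ by \[ f^{\mathrm{num}}_1 = \tfrac16\bigl(u_{1,+}^2 + u_{1,+}u_{1,-} + u_{1,-}^2\bigr) + \tfrac12\bigl(\log U_+ + \log U_-\bigr), \] \[ f^{\mathrm{num}}_2 = \tfrac12(u_{1,+}+u_{1,-})\, f^{\mathrm{num}}_1 - \tfrac12\Bigl(\tfrac16 u_{1,+}^3 + u_{1,+}\log U_+ + \tfrac16 u_{1,-}^3 + u_{1,-}\log U_-\Bigr) - \frac{\tfrac12(U_+ + U_-)}{L(U_-,U_+)}\cdot \tfrac12(u_{1,+}+u_{1,-}), \] where $L(a,b) = \frac{b-a}{\log b - \log a}$ for $a\neq b$ and $L(a,a)=a$ (logarithmic mean, $a,b>0$). Then $f^{\mathrm{num}}$ is consistent,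 i.e. $f^{\mathrm{num}}(u,u) = f(u)$ for all $u\in\mathbb{R}^2$, and entropy-conservative, i.e. for all $u_-,u_+\in\mathbb{R}^2$, \[ \bigl(w(u_+) - w(u_-)\bigr)\cdot f^{\mathrm{num}}(u_-,u_+) = \psi(u_+) - \psi(u_-). \]
   Context: Here $\cdot$ denotes the Euclidean inner product on $\mathbb{R}^2$ and $\log$ is the natural logarithm; note $\log U(u) = \tfrac12 u_1^2 - u_2$. The convention $L(a,a)=a$ is the continuous extension of the logarithmic mean to the diagonal. *)

From Stdlib Require Export Reals.
Open Scope R_scope.

Definition kk_flux (u : R * R) : R * R :=
  let (u1, u2) := u in (u1 ^ 2 - u2, / 3 * u1 ^ 3 - u1).

Definition kk_U (u : R * R) : R :=
  let (u1, u2) := u in exp (/ 2 * u1 ^ 2 - u2).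

Definition kk_w (u : R * R) : R * R := (fst u * kk_U u, - kk_U u).

Definition kk_psi (u : R * R) : R :=
  let (u1, u2) := u in (2 / 3 * u1 ^ 3 - u1 * u2) * kk_U u.

Definition logmean (a b : R) : R :=
  if Req_EM_T a b then a else (b - a) / (ln b - ln a).

Definition dot2 (x y : R * R) : R := fst x * fst y + snd x * snd y.

Definition sub2 (x y : R * R) : R * R := (fst x - fst y, snd x - snd y).

Definition fnum1 (um up : R * R) : R :=
  let a := fst up in let b := fst um in
  / 6 * (a ^ 2 + a * b + b ^ 2) + / 2 * (ln (kk_U up) + ln (kk_U um)).

Definition fnum2 (um up : R * R) : R :=
  let a := fst up in let b := fst um in
  / 2 * (a + b) * fnum1 um up
  - / 2 * (/ 6 * a ^ 3 + a * ln (kk_U up) + / 6 * b ^ 3 + b * ln (kk_U um))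
  - (/ 2 * (kk_U up + kk_U um)) / logmean (kk_U um) (kk_U up) * (/ 2 * (a + b)).

Definition fnum (um up : R * R) : R * R := (fnum1 um up, fnum2 um up).

From Stdlib Require Import Reals Lra.
Open Scope R_scope.

(* With l = log U, i.e. u2 = u1^2/2 - l, every term of the entropy identity is a
   polynomial in u1, l and U except the last summand of fnum2, which carries
   M = S / L(U-, U+) with S = (U+ + U-)/2.  The defining property of the
   logarithmic mean, (U+ - U-) M = S (l+ - l-), is the only non-polynomial fact
   needed: the entropy defect is (u1+ + u1-)/2 times its defect. *)

Lemma logmean_diag (a : R) : logmean a a = a.
Proof.
  unfold logmean; destruct (Req_EM_T a a) as [_ | Hne]; [reflexivity | now exfalso].
Qed.

Lemma logmean_mul_ln_sub (a b : R) :
  0 < a -> 0 < b -> logmean a b * (ln b - ln a) = b - a.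
Proof.
  intros Ha Hb; unfold logmean.
  destruct (Req_EM_T a b) as [-> | Hne]; [ring |].
  assert (ln b - ln a <> 0).
  { intro Hln; apply Hne, ln_inv; lra. }
  field; assumption.
Qed.

Lemma logmean_neq0 (a b : R) : 0 < a -> 0 < b -> logmean a b <> 0.
Proof.
  intros Ha Hb H0.
  assert (Hab : b - a = 0) by (rewrite <- logmean_mul_ln_sub, H0 by assumption; ring).
  replace b with a in H0 by lra.
  rewrite logmean_diag in H0; lra.
Qed.

Lemma sub_mul_div_logmean (a b S : R) :
  0 < a -> 0 < b -> (b - a) * (S / logmean a b) = S * (ln b - ln a).
Proof.
  intros Ha Hb.
  rewrite <- (logmean_mul_ln_sub a b) by assumption.
  field; apply logmean_neq0; assumption.
Qed.

Lemma kk_U_pos (u : R * R) : 0 < kk_U u.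
Proof. destruct u; apply exp_pos. Qed.

Lemma ln_kk_U (u : R * R) : ln (kk_U u) = / 2 * fst u ^ 2 - snd u.
Proof. destruct u; apply ln_exp. Qed.

Lemma fnum_consistent (u : R * R) : fnum u u = kk_flux u.
Proof.
  assert (HU := kk_U_pos u).
  unfold fnum, fnum2; rewrite logmean_diag.
  unfold fnum1; rewrite ln_kk_U.
  destruct u as [a c]; cbv beta iota delta [kk_flux fst snd].
  f_equal; field; lra.
Qed.

Lemma fnum_entropy_conservative (um up : R * R) :
  dot2 (sub2 (kk_w up) (kk_w um)) (fnum um up) = kk_psi up - kk_psi um.
Proof.
  set (S := / 2 * (kk_U up + kk_U um)).
  set (M := S / logmean (kk_U um) (kk_U up)).
  assert (Hjump : (kk_U up - kk_U um) * M = S * (ln (kk_U up) - ln (kk_U um)))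
    by (apply sub_mul_div_logmean; apply kk_U_pos).
  unfold dot2, sub2, kk_w, fnum, fnum2, fnum1; fold S M.
  apply Rminus_diag_uniq.
  transitivity (/ 2 * (fst up + fst um)
                * ((kk_U up - kk_U um) * M - S * (ln (kk_U up) - ln (kk_U um)))).
  - clearbody M; rewrite !ln_kk_U; unfold S.
    destruct um as [b cm], up as [a cp]; cbv beta iota delta [kk_psi fst snd].
    field.
  - rewrite Hjump; ring.
Qed.

Theorem mainTheorem1 :
  (forall u : R * R, fnum u u = kk_flux u) /\
  (forall um up : R * R,
     dot2 (sub2 (kk_w up) (kk_w um)) (fnum um up) = kk_psi up - kk_psi um).
Proof.
  split.
  - exact fnum_consistent.
  - exact fnum_entropy_conservative.
Qed.
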